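(* Let $R$ be a local ring, let $p(X)=\sum_{i=0}^na_iX^i\in R[X]$ be such that $p(X)/1$ is a strong divisor of the local ring $R(X)$ that is not a unit, and let $I=(a_0,\ldots,a_n)$ be the content ideal of $p(X)$. Then $I(X):=IR(X)=R(X)p(X)/1$, and $I=R\rho$ for some strong divisor $\rho$ of $R$ such that $p(X)/1\simeq\rho$ in $R(X)$. If $p(X)/1\in R(X)a_i$ for some $i$, then $I=Ra_i$. Moreover, the image of $\mathrm{Spec}(R(X)_{p(X)/1})\to\mathrm{Spec}(R)$ is $\mathrm D(I)$.
   Context: All rings are commutative with identity; ''local'' means having a unique maximal ideal. For a ring $A$, $A(X):=A[X]_{\Sigma_A}$ with $\Sigma_A=\{q\in A[X]: c(q)=A\}$, $c(q)$ the ideal generated by the coefficients; if $A$ is local, so is $A(X)$. A strong divisor of a local ring $A$ is a regular element $t$ such that $At$ is comparable under inclusion with every ideal of $A$. Two elements $x,y$ of a ring $B$ are equivalent, written $x\simeq y$, if $\mathrm D(x)=\mathrm D(y)$ in $\mathrm{Spec}(B)$ (equivalently $\sqrt{Bx}=\sqrt{By}$). $\mathrm D(I)=\{P\in\mathrm{Spec}(R): I\not\subseteq P\}$. *)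

From HB Require Import structures.
From mathcomp Require Import all_boot all_order all_algebra.
Set Implicit Arguments. Unset Strict Implicit. Unset Printing Implicit Defensive.
Import GRing.Theory.
Local Open Scope ring_scope.

Section Ideals.
Variable B : comNzRingType.

Definition is_ideal (I : B -> Prop) : Prop :=
  [/\ I 0, (forall x y, I x -> I y -> I (x + y)) & (forall a x, I x -> I (a * x))].

Definition ideal_eq (I J : B -> Prop) : Prop := forall x, I x <-> J x.
Definition ideal_sub (I J : B -> Prop) : Prop := forall x, I x -> J x.

Definition prime_ideal (P : B -> Prop) : Prop :=
  [/\ is_ideal P, ~ P 1 & forall x y, P (x * y) -> P x \/ P y].

Definition maximal_ideal (M : B -> Prop) : Prop :=
  [/\ is_ideal M, ~ M 1 &
      forall J, is_ideal J -> ideal_sub M J -> ideal_eq J M \/ J 1].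

Definition is_local : Prop :=
  exists M, maximal_ideal M /\ forall N, maximal_ideal N -> ideal_eq N M.

Definition is_unit (x : B) : Prop := exists y, x * y = 1.

Definition principal (t : B) : B -> Prop := fun y => exists a, y = a * t.

Definition regular (t : B) : Prop := forall x, t * x = 0 -> x = 0.

Definition strong_divisor (t : B) : Prop :=
  regular t /\ forall J, is_ideal J ->
    ideal_sub (principal t) J \/ ideal_sub J (principal t).

(* D(x) = primes not containing x;  x ~ y iff D(x) = D(y) *)
Definition equivalent (x y : B) : Prop :=
  forall P, prime_ideal P -> (~ P x <-> ~ P y).

End Ideals.

Definition ext_ideal (A B : comNzRingType) (f : A -> B) (I : A -> Prop) : B -> Prop :=
  fun y => exists n (b : 'I_n -> B) (a : 'I_n -> A),
    (forall k, I (a k)) /\ y = \sum_(k < n) b k * f (a k).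

(* B together with f : A -> B is a localization of A at the multiplicative
   set S (the usual universal characterization, which determines B up to
   unique isomorphism) *)
Definition is_localization (A B : comNzRingType) (S : A -> Prop) (f : A -> B) : Prop :=
  [/\ forall s, S s -> is_unit (f s),
      forall b, exists a s, S s /\ b * f s = f a &
      forall a, f a = 0 -> exists s, S s /\ s * a = 0].

Definition content (R : comNzRingType) (q : {poly R}) : R -> Prop :=
  fun r => exists c : nat -> R, r = \sum_(i < size q) c i * q`_i.

(* Sigma_R = { q in R[X] : c(q) = R } *)
Definition Sigma (R : comNzRingType) : {poly R} -> Prop :=
  fun q => content q 1.

Definition powers (B : comNzRingType) (g : B) : B -> Prop :=
  fun b => exists n : nat, b = g ^+ n.

(** Let M be the maximal ideal of R and I = c(p).  For every ideal N of R,
    elements of Sigma are cancellable modulo N[X], so N R(X) contracts to N.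
    Since f p is a strong divisor, it is comparable with every f a_k.  If
    f p = u f a_k with u not a unit, clearing denominators puts p g into
    (M I)[X] for some g in Sigma; comparing the last coefficients of p and g
    outside M I and M gives p in (M I)[X], so p = 0 by Nakayama, contradicting
    regularity.  Hence every f a_k lies in R(X) f p, i.e. I R(X) = R(X) f p, and
    the same argument produces some a_j associated to f p.  Comparability of
    the extensions J R(X) with R(X) f p then descends to ideals J of R, so
    rho = a_j is a strong divisor generating I.  Finally, a prime P with
    I not contained in P extends through P[X], which is disjoint from the
    products s p^n with s in Sigma, to a prime of R(X)_(f p). *)

From HB Require Import structures.
From mathcomp Require Import all_boot all_order all_algebra.
From mathcomp Require Import zify ring.
From mathcomp Require Import classical_sets.
From Stdlib Require Import Classical.
Set Implicit Arguments. Unset Strict Implicit. Unset Printing Implicit Defensive.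
Import GRing.Theory.
Local Open Scope ring_scope.

Section Ideals.
Variable A : comNzRingType.
Implicit Types (I J : A -> Prop) (a x y : A).

Lemma ideal0 I : is_ideal I -> I 0.
Proof. by case. Qed.

Lemma idealD I x y : is_ideal I -> I x -> I y -> I (x + y).
Proof. by case=> _ + _; apply. Qed.

Lemma idealMl I a x : is_ideal I -> I x -> I (a * x).
Proof. by case=> _ _; apply. Qed.

Lemma idealMr I a x : is_ideal I -> I x -> I (x * a).
Proof. by rewrite mulrC; apply: idealMl. Qed.

Lemma idealB I x y : is_ideal I -> I x -> I y -> I (x - y).
Proof. by move=> II Ix Iy; rewrite -mulN1r in Iy *; apply: idealD => //; apply: idealMl. Qed.

Lemma ideal_sum I (T : Type) (r : seq T) (P : pred T) (F : T -> A) :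
  is_ideal I -> (forall i, P i -> I (F i)) -> I (\sum_(i <- r | P i) F i).
Proof. by move=> II FI; apply: big_ind => //; [apply: ideal0 | move=> *; apply: idealD]. Qed.

Lemma ideal_unit_cancel I x y : is_ideal I -> is_unit y -> I (x * y) -> I x.
Proof. by move=> II [z yz] Ixy; rewrite -[x]mulr1 -yz mulrA; apply: idealMr. Qed.

Lemma proper_ideal_nonunit I x : is_ideal I -> ~ I 1 -> I x -> ~ is_unit x.
Proof. by move=> II I1 Ix [y xy]; apply: I1; rewrite -xy; apply: idealMr. Qed.

Lemma zero_ideal : is_ideal (fun z : A => z = 0).
Proof. by split => // [x y -> ->|a x ->]; rewrite ?addr0 ?mulr0. Qed.

Lemma principal_ideal x : is_ideal (principal x).
Proof.
split; first by exists 0; rewrite mul0r.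
- by move=> _ _ [a ->] [b ->]; exists (a + b); rewrite mulrDl.
- by move=> a _ [b ->]; exists (a * b); rewrite mulrA.
Qed.

Lemma principal_self x : principal x x.
Proof. by exists 1; rewrite mul1r. Qed.

Lemma prime_ideal_eq I J : ideal_eq I J -> prime_ideal J -> prime_ideal I.
Proof.
move=> IJ [[J0 JD JM] J1 JP]; split; first split.
- exact/IJ.
- by move=> x y /IJ Jx /IJ Jy; apply/IJ/JD.
- by move=> a x /IJ Jx; apply/IJ/JM.
- by move=> /IJ.
- by move=> x y /IJ /JP [] /IJ; [left | right].
Qed.

Lemma prime_ideal_expr P x n : prime_ideal P -> P (x ^+ n) -> P x.
Proof.
case=> PI P1 PP; elim: n => [|n IHn]; first by rewrite expr0.
by rewrite exprS => /PP [].
Qed.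

Lemma equivalent_unit_mull u x : is_unit u -> equivalent (u * x) x.
Proof.
move=> u_unit P [PI P1 PP]; split=> [nPux Px | nPx Pux]; first by apply: nPux; apply: idealMl.
by case: (PP _ _ Pux) => [Pu|//]; apply: proper_ideal_nonunit Pu u_unit.
Qed.

Lemma chain_ideal_union (F : set (A -> Prop)) :
  (exists2 J, F J & J 0) -> (forall J x, F J -> J x -> is_ideal J /\ ~ J 1) ->
  total_on F subset ->
  is_ideal (\bigcup_(J in F) J)%classic /\ ~ (\bigcup_(J in F) J)%classic 1.
Proof.
move=> [J0 FJ0 J00] FI Ftot; split; last by move=> [J FJ J1]; have [] := FI J 1 FJ J1.
split; first by exists J0.
- move=> x y [I FI' Ix] [J FJ Jy]; have [IJ|JI] := Ftot I J FI' FJ.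
    by exists J => //; apply: idealD (FI J y FJ Jy).1 (IJ _ Ix) Jy.
  by exists I => //; apply: idealD (FI I x FI' Ix).1 Ix (JI _ Jy).
- by move=> a x [J FJ Jx]; exists J => //; apply: idealMl (FI J x FJ Jx).1 Jx.
Qed.

Lemma proper_ideal_sub_maximal I : is_ideal I -> ~ I 1 ->
  exists N, maximal_ideal N /\ ideal_sub I N.
Proof.
move=> II I1.
(* [set0] is admitted so that the empty chain has an upper bound *)
pose P J := J = set0 \/ [/\ is_ideal J, ~ J 1 & ideal_sub I J].
have P_inhabited J x : P J -> J x -> [/\ is_ideal J, ~ J 1 & ideal_sub I J].
  by case=> // J0; rewrite J0.
have [N [PN Nmax]] : exists N, P N /\ forall J, (N `<` J)%classic -> ~ P J.
  apply: Zorn_bigcup => F FP Ftot.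
  have [[J FJ J0]|Fempty] := classic (exists2 J, F J & J 0); last first.
    left; apply/seteqP; split=> // x [J FJ Jx]; apply: Fempty; exists J => //.
    by have [JI _ _] := P_inhabited J x (FP J FJ) Jx; apply: ideal0.
  have FI K x : F K -> K x -> is_ideal K /\ ~ K 1.
    by move=> FK Kx; have [] := P_inhabited K x (FP K FK) Kx.
  have [UI U1] := chain_ideal_union (ex_intro2 _ _ J FJ J0) FI Ftot.
  right; split=> // x Ix; exists J => //.
  by have [_ _] := P_inhabited J 0 (FP J FJ) J0; apply.
have [N0|[NI N1 IN]] := PN.
  exfalso; apply: (Nmax I); last by right; split.
  rewrite N0 properEneq; split=> //; apply/eqP => I0.
  by have := ideal0 II; rewrite -I0.
exists N; split=> //; split=> // J JI NJ.
have [J1|J1] := classic (J 1); [by right | left].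
move=> x; split=> [Jx|]; last exact: NJ.
apply: NNPP => Nx; apply: (Nmax J); first by split=> // /(_ x Jx).
by right; split=> // y /IN /NJ.
Qed.

Definition nonunits_ideal (M : A -> Prop) :=
  [/\ is_ideal M, ~ M 1 & forall x, ~ is_unit x -> M x].

Lemma local_nonunits_ideal : is_local A -> exists M, nonunits_ideal M.
Proof.
move=> [M [[MI M1 _] Muniq]]; exists M; split=> // x x_nunit.
have [|N [NM xN]] := @proper_ideal_sub_maximal (principal x) (principal_ideal x).
  by move=> [y xy]; apply: x_nunit; exists y; rewrite mulrC.
exact/(Muniq N NM)/xN/principal_self.
Qed.

End Ideals.

Section Combinations.
Variable A : comNzRingType.
Implicit Types (I : A -> Prop) (a : nat -> A).

Definition comb_in I n a : A -> Prop :=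
  fun x => exists m : nat -> A, (forall l, I (m l)) /\ x = \sum_(l < n) m l * a l.

Lemma comb_in_ideal I n a : is_ideal I -> is_ideal (comb_in I n a).
Proof.
move=> II; split.
- exists (fun _ => 0); split=> [_|]; first exact: ideal0.
  by rewrite big1 // => l _; rewrite mul0r.
- move=> _ _ [m [Im ->]] [m' [Im' ->]]; exists (fun l => m l + m' l); split.
    by move=> l; apply: idealD.
  by rewrite -big_split; apply: eq_bigr => l _; rewrite mulrDl.
- move=> c _ [m [Im ->]]; exists (fun l => c * m l); split.
    by move=> l; apply: idealMl.
  by rewrite mulr_sumr; apply: eq_bigr => l _; rewrite mulrA.
Qed.

Lemma nakayama I n a : is_ideal I -> (forall m, I m -> is_unit (1 - m)) ->
  (forall k, (k < n)%N -> comb_in I n a (a k)) -> forall k, (k < n)%N -> a k = 0.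
Proof.
move=> II I_1B; elim: n => [//|n IHn] aI.
have [m [Im Ean]] := aI n (ltnSn n); rewrite big_ord_recr /= in Ean.
have [u u1m] := I_1B _ (Im n).
(* [(1 - m n) a n] is a combination of the earlier [a l] and [1 - m n] is a unit *)
have an_comb : comb_in I n a (a n).
  exists (fun l => u * m l); split=> [l|]; first exact: idealMl.
  have Ean' : (1 - m n) * a n = \sum_(l < n) m l * a l.
    by rewrite mulrBl mul1r {1}Ean addrK.
  rewrite -[a n]mul1r -u1m mulrAC mulrC Ean' mulr_sumr.
  by apply: eq_bigr => l _; rewrite mulrA.
have a_lt_n : forall k, (k < n)%N -> a k = 0.
  apply: IHn => k kn; have [m' [Im' ->]] := aI k (ltnW kn).
  rewrite big_ord_recr /=; apply: idealD; first exact: comb_in_ideal.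
    by exists m'.
  by apply: idealMl => //; exact: comb_in_ideal.
move=> k; rewrite ltnS leq_eqVlt => /orP[/eqP ->|]; last exact: a_lt_n.
have [m' [_ ->]] := an_comb.
by rewrite big1 // => l _; rewrite a_lt_n // mulr0.
Qed.

End Combinations.

Section PolyIdeals.
Variable A : comNzRingType.
Implicit Types (I N K P : A -> Prop) (p q g : {poly A}).

Definition coefs_in I p := forall i, I p`_i.

(* the product ideal [I c(p)] *)
Definition content_mul I p := comb_in I (size p) (nth 0 p).

Lemma coefs_in_ideal I : is_ideal I -> is_ideal (coefs_in I).
Proof.
move=> II; split.
- by move=> i; rewrite coef0; apply: ideal0.
- by move=> p q Ip Iq i; rewrite coefD; apply: idealD.
- by move=> q p Ip i; rewrite coefM; apply: ideal_sum => // j _; apply: idealMl.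
Qed.

Lemma coefs_in_polyC I r : is_ideal I -> I r -> coefs_in I r%:P.
Proof. by move=> II Ir i; rewrite coefC; case: eqP => // _; apply: ideal0. Qed.

Lemma last_coef_notin N p : N 0 -> ~ coefs_in N p ->
  exists k, ~ N p`_k /\ forall j, (k < j)%N -> N p`_j.
Proof.
move=> N0 nNp; suff /(_ (size p)) : forall n, (forall j, (n <= j)%N -> N p`_j) ->
    exists k, ~ N p`_k /\ forall j, (k < j)%N -> N p`_j.
  by apply=> j pj; rewrite nth_default.
elim=> [|n IHn] Nabove; first by exfalso; apply: nNp => j; apply: Nabove.
have [Npn|nNpn] := classic (N p`_n); last by exists n; split.
by apply: IHn => j; rewrite leq_eqVlt => /orP[/eqP <-|]; [exact: Npn | exact: Nabove].
Qed.

(* McCoy-type cancellation: compare the last coefficients of [p] and [g] outside [N] and [K] *)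
Lemma coefs_in_mul_cancel N K p g : is_ideal N -> is_ideal K ->
  (forall j y, K y -> N (p`_j * y)) -> (forall x y, ~ K y -> N (x * y) -> N x) ->
  ~ coefs_in K g -> coefs_in N (p * g) -> coefs_in N p.
Proof.
move=> NI KI pK Ncancel nKg Npg; apply: NNPP => nNp.
have [k [Npk Nabove]] := last_coef_notin (ideal0 NI) nNp.
have [m [Kgm Kabove]] := last_coef_notin (ideal0 KI) nKg.
apply: Npk; apply: (Ncancel _ _ Kgm).
have km : (k < (k + m).+1)%N by rewrite ltnS leq_addr.
have := Npg (k + m)%N; rewrite coefM (bigD1 (Ordinal km)) //= addKn => Nsum.
have Nrest : N (\sum_(i < (k + m).+1 | i != Ordinal km) p`_i * g`_(k + m - i)).
  apply: ideal_sum => // -[i ilt]; rewrite -val_eqE /= => /negbTE ik.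
  case: (ltngtP i k) => [ltik|ltki|eqik]; last by rewrite eqik eqxx in ik.
    by apply: pK; apply: Kabove; lia.
  by apply: idealMr => //; apply: Nabove.
by have := idealB NI Nsum Nrest; rewrite addrK.
Qed.

Lemma coefs_in_prime P : prime_ideal P -> prime_ideal (coefs_in P).
Proof.
move=> [PI P1 PP]; split; first exact: coefs_in_ideal.
  by move=> /(_ 0%N); rewrite coefC.
move=> p q Ppq; have [Pq|nPq] := classic (coefs_in P q); [by right | left].
apply: (coefs_in_mul_cancel PI PI _ _ nPq Ppq).
  by move=> j y; apply: idealMl.
by move=> x y nPy /PP [].
Qed.

Lemma content_ideal p : is_ideal (content p).
Proof.
split.
- by exists (fun _ => 0); rewrite big1 // => i _; rewrite mul0r.
- move=> _ _ [c ->] [c' ->]; exists (fun i => c i + c' i).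
  by rewrite -big_split; apply: eq_bigr => i _; rewrite mulrDl.
- move=> a _ [c ->]; exists (fun i => a * c i).
  by rewrite mulr_sumr; apply: eq_bigr => i _; rewrite mulrA.
Qed.

Lemma content_coef p k : content p p`_k.
Proof.
have [kp|pk] := ltnP k (size p); last first.
  by rewrite nth_default //; apply: ideal0; apply: content_ideal.
exists (fun i => (i == k)%:R).
rewrite (bigD1 (Ordinal kp)) //= eqxx mul1r big1 ?addr0 // => -[i ilt].
by rewrite -val_eqE /= => /negbTE ->; rewrite mul0r.
Qed.

Lemma content_sub_ideal N p : is_ideal N -> coefs_in N p -> ideal_sub (content p) N.
Proof. by move=> NI Np _ [c ->]; apply: ideal_sum => // i _; apply: idealMl. Qed.

Lemma content_mul_ideal I p : is_ideal I -> is_ideal (content_mul I p).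
Proof. exact: comb_in_ideal. Qed.

Lemma content_mulr I p a y : is_ideal I -> content p a -> I y -> content_mul I p (a * y).
Proof.
move=> II [c ->] Iy; exists (fun i => c i * y); split=> [i|]; first exact: idealMl.
by rewrite mulr_suml; apply: eq_bigr => i _; rewrite mulrAC.
Qed.

Lemma Sigma1 : Sigma (1 : {poly A}).
Proof. by exists (fun _ => 1); rewrite size_poly1 big_ord1 coef1 mul1r. Qed.

Lemma Sigma_coef_unit g i : is_unit g`_i -> Sigma g.
Proof.
by move=> [u gu]; rewrite /Sigma -gu; apply: idealMr; [apply: content_ideal | apply: content_coef].
Qed.

Lemma Sigma_not_coefs_in I g : is_ideal I -> ~ I 1 -> Sigma g -> ~ coefs_in I g.
Proof. by move=> II I1 Sg Ig; apply: I1; apply: (content_sub_ideal II Ig). Qed.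

Lemma Sigma_cancel N g r : is_ideal N -> Sigma g -> coefs_in N (r%:P * g) -> N r.
Proof.
move=> NI [c Ec] Nrg; rewrite -[r]mulr1 Ec mulr_sumr; apply: ideal_sum => // i _.
by rewrite mulrCA -coefCM; apply: idealMl.
Qed.

End PolyIdeals.

Section LocalRing.
Variables (A : comNzRingType) (M : A -> Prop).
Hypothesis M_nonunits : nonunits_ideal M.

Lemma nonunits_ideal_unit y : ~ M y -> is_unit y.
Proof. by case: M_nonunits => _ _ Mnu nMy; apply: NNPP => /Mnu. Qed.

Lemma nonunits_ideal_1B m : M m -> is_unit (1 - m).
Proof.
case: M_nonunits => MI M1 _ Mm; apply: nonunits_ideal_unit => M1m; apply: M1.
by rewrite -(subrK m 1); apply: idealD.
Qed.

Lemma Sigma_mul (g h : {poly A}) : Sigma g -> Sigma h -> Sigma (g * h).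
Proof.
case: M_nonunits => MI M1 Mnu Sg Sh; apply: NNPP => nSgh.
have Mgh : coefs_in M (g * h).
  by move=> i; apply: Mnu => /Sigma_coef_unit.
apply: (Sigma_not_coefs_in MI M1 Sg).
apply: (coefs_in_mul_cancel MI MI _ _ (Sigma_not_coefs_in MI M1 Sh) Mgh).
  by move=> j y; apply: idealMl.
by move=> x y /nonunits_ideal_unit; apply: ideal_unit_cancel.
Qed.

Lemma nakayama_content (p : {poly A}) : coefs_in (content_mul M p) p -> p = 0.
Proof.
case: M_nonunits => MI _ _ Mp; apply/polyP => k; rewrite coef0.
have [kp|pk] := ltnP k (size p); last by rewrite nth_default.
exact: (nakayama MI nonunits_ideal_1B (fun k _ => Mp k)).
Qed.

End LocalRing.

Section Comap.
Variables (A C : comNzRingType) (h : {rmorphism A -> C}).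

Lemma ideal_comap J : is_ideal J -> is_ideal (fun a => J (h a)).
Proof.
move=> JI; split.
- by rewrite rmorph0; apply: ideal0.
- by move=> x y Jx Jy; rewrite rmorphD; apply: idealD.
- by move=> a x Jx; rewrite rmorphM; apply: idealMl.
Qed.

Lemma prime_ideal_comap Q : prime_ideal Q -> prime_ideal (fun a => Q (h a)).
Proof.
move=> [QI Q1 QP]; split; first exact: ideal_comap.
  by rewrite rmorph1.
by move=> x y; rewrite rmorphM => /QP.
Qed.

End Comap.

Lemma rmorph_poly_sum (A C : comNzRingType) (h : {rmorphism {poly A} -> C}) p :
  h p = \sum_(k < size p) h 'X^k * h (p`_k)%:P.
Proof.
rewrite -{1}(coefK p) poly_def rmorph_sum; apply: eq_bigr => k _.
by rewrite -mul_polyC rmorphM mulrC.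
Qed.

Section Localization.
Variables (A C : comNzRingType) (S : A -> Prop) (h : {rmorphism A -> C}).
Hypotheses (h_loc : is_localization S h) (S1 : S 1)
  (SM : forall x y, S x -> S y -> S (x * y)).

Definition loc_ext (P : A -> Prop) : C -> Prop :=
  fun c => exists w q, [/\ S w, P q & c * h w = h q].

Lemma loc_eq a b : h a = h b -> exists2 s, S s & s * a = s * b.
Proof.
case: h_loc => _ _ h0 hab; have [s [Ss sab]] : exists s, S s /\ s * (a - b) = 0.
  by apply: h0; rewrite rmorphB hab subrr.
by exists s => //; apply/eqP; rewrite -subr_eq0 -mulrBr sab.
Qed.

Lemma loc_ext_ideal P : is_ideal P -> is_ideal (loc_ext P).
Proof.
case: h_loc => _ frac _ PI; split.
- by exists 1, 0; split=> //; [apply: ideal0 | rewrite mul0r rmorph0].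
- move=> x y [w [q [Sw Pq xw]]] [w' [q' [Sw' Pq' yw']]].
  exists (w * w'), (q * w' + q' * w); split; first exact: SM.
    by apply: (idealD PI); apply: (idealMr _ PI).
  by rewrite !rmorphD !rmorphM -xw -yw'; ring.
- move=> c x [w [q [Sw Pq xw]]]; have [b [s [Ss cs]]] := frac c.
  exists (s * w), (b * q); split; [exact: SM | exact: idealMl |].
  by rewrite !rmorphM -xw -cs; ring.
Qed.

Lemma loc_ext_img P a : P a -> loc_ext P (h a).
Proof. by exists 1, a; split=> //; rewrite rmorph1 mulr1. Qed.

Lemma loc_ext_contract P a : is_ideal P -> loc_ext P (h a) -> exists2 t, S t & P (a * t).
Proof.
move=> PI [w [q [Sw Pq aw]]]; rewrite -rmorphM in aw.
have [s Ss saw] := loc_eq aw; exists (w * s); first exact: SM.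
have -> : a * (w * s) = s * (a * w) by ring.
by rewrite saw; apply: idealMl.
Qed.

Section PrimeDisjoint.
Variable P : A -> Prop.
Hypotheses (P_prime : prime_ideal P) (P_disjoint : forall s, S s -> ~ P s).

Lemma loc_ext_prime_contract a : loc_ext P (h a) -> P a.
Proof.
case: P_prime => PI _ PP /(loc_ext_contract PI) [t St /PP []] //.
by move=> /(P_disjoint St).
Qed.

Lemma loc_ext_prime : prime_ideal (loc_ext P).
Proof.
case: (P_prime) => PI _ PP; case: h_loc => _ frac _.
split; first exact: loc_ext_ideal.
  by rewrite -(rmorph1 h) => /loc_ext_prime_contract /(P_disjoint S1).
move=> x y Pxy; have [b [w [Sw xw]]] := frac x; have [b' [w' [Sw' yw']]] := frac y.
have : loc_ext P (h (b * b')).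
  rewrite rmorphM -xw -yw' mulrACA; apply: idealMr => //; exact: loc_ext_ideal.
case/loc_ext_prime_contract/PP => [Pb | Pb']; [left; exists w, b | right; exists w', b'].
all: by split.
Qed.

End PrimeDisjoint.
End Localization.

Definition mul_powers (A : comNzRingType) (S : A -> Prop) (a : A) : A -> Prop :=
  fun w => exists s n, S s /\ w = s * a ^+ n.

Lemma mul_powers1 (A : comNzRingType) (S : A -> Prop) a : S 1 -> mul_powers S a 1.
Proof. by exists 1, 0%N; rewrite expr0 mulr1. Qed.

Lemma mul_powersM (A : comNzRingType) (S : A -> Prop) a :
  (forall x y, S x -> S y -> S (x * y)) ->
  forall x y, mul_powers S a x -> mul_powers S a y -> mul_powers S a (x * y).
Proof.
move=> SM _ _ [s [n [Ss ->]]] [s' [n' [Ss' ->]]]; exists (s * s'), (n + n')%N.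
by split; [apply: SM | rewrite exprD; ring].
Qed.

Lemma localization_comp (A B C : comNzRingType) (S : A -> Prop)
    (f : {rmorphism A -> B}) (g : {rmorphism B -> C}) a :
  is_localization S f -> is_localization (powers (f a)) g ->
  is_localization (mul_powers S a) (g \o f).
Proof.
move=> [fS ffrac f0] [gS gfrac g0]; split.
- move=> _ [s [n [Ss ->]]]; have [u su] := fS s Ss.
  have [v av] := gS (f a) (ex_intro _ 1%N (esym (expr1 _))).
  exists (g u * v ^+ n); rewrite /= !rmorphM !rmorphXn mulrACA -rmorphM su rmorph1.
  by rewrite mul1r -exprMn av expr1n.
- move=> c; have [b [_ [[n ->] cb]]] := gfrac c; have [q [s [Ss bs]]] := ffrac b.
  exists q, (s * a ^+ n); split; first by exists s, n.
  by rewrite /= (rmorphM f) (rmorphXn f) (rmorphM g) mulrCA cb mulrC -(rmorphM g) bs.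
- move=> x /= gfx; have [_ [[n ->] ax]] := g0 _ gfx.
  have : f (a ^+ n * x) = 0 by rewrite rmorphM rmorphXn.
  move=> /f0 [s [Ss sax]]; exists (s * a ^+ n); split; first by exists s, n.
  by rewrite -mulrA.
Qed.

Section RX.
Variables (R B : comNzRingType) (M : R -> Prop) (f : {rmorphism {poly R} -> B}).
Hypotheses (M_nonunits : nonunits_ideal M) (f_loc : is_localization (@Sigma R) f).

Local Notation RX_ext N := (loc_ext (@Sigma R) f (coefs_in N)).

Lemma RX_ext_ideal N : is_ideal N -> is_ideal (RX_ext N).
Proof.
move=> NI; apply: (loc_ext_ideal f_loc (@Sigma1 R) (Sigma_mul M_nonunits)).
exact: coefs_in_ideal.
Qed.

Lemma RX_ext_contract N x :
  is_ideal N -> RX_ext N (f x) -> exists2 g, Sigma g & coefs_in N (x * g).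
Proof.
by move=> NI; apply: (loc_ext_contract f_loc (Sigma_mul M_nonunits)); apply: coefs_in_ideal.
Qed.

Lemma RX_ext_contract_polyC N r : is_ideal N -> RX_ext N (f r%:P) -> N r.
Proof. by move=> NI /(RX_ext_contract NI) [g Sg]; apply: Sigma_cancel. Qed.

Lemma f_polyC_eq0 r : f r%:P = 0 -> r = 0.
Proof.
move=> fr0; apply: (RX_ext_contract_polyC (@zero_ideal R)); rewrite fr0.
by apply: ideal0; apply: RX_ext_ideal; apply: zero_ideal.
Qed.

Lemma f_polyC_principal x r : principal (f x%:P) (f r%:P) -> principal x r.
Proof.
case: f_loc => _ frac _ [b rb]; have [q [s [Ss bs]]] := frac b.
apply: (RX_ext_contract_polyC (principal_ideal x)); exists s, (q * x%:P); split=> //.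
  by move=> i; rewrite coefMC; exists q`_i.
by rewrite rb rmorphM -bs mulrAC.
Qed.

Lemma nonunit_num_coefs b s q : ~ is_unit b -> Sigma s -> b * f s = f q -> coefs_in M q.
Proof.
case: M_nonunits => _ _ Mnu; case: f_loc => fS _ _ b_nunit Ss bs i.
apply: Mnu => /Sigma_coef_unit /fS [w qw]; apply: b_nunit.
by exists (f s * w); rewrite mulrA bs.
Qed.

Lemma nonunit_mul_ext p b x : ~ is_unit b -> coefs_in (content p) x ->
  RX_ext (content_mul M p) (b * f x).
Proof.
case: (M_nonunits) => MI _ _; case: f_loc => _ frac _ b_nunit px.
have [q [s [Ss bs]]] := frac b; have Mq := nonunit_num_coefs b_nunit Ss bs.
exists s, (q * x); split=> //; last by rewrite rmorphM -bs mulrAC.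
move=> i; rewrite coefM; apply: ideal_sum => [|j _]; first exact: content_mul_ideal.
by rewrite mulrC; apply: content_mulr.
Qed.

Section StrongDivisor.
Variable p : {poly R}.
Hypothesis p_sd : strong_divisor (f p).

Lemma strong_divisor_poly_neq0 : p != 0.
Proof.
case: p_sd => reg _; apply/eqP => p0.
by have := reg 1; rewrite p0 rmorph0 mul0r => /(_ erefl) /eqP; rewrite oner_eq0.
Qed.

Lemma poly_notin_content_mul_ext : ~ RX_ext (content_mul M p) (f p).
Proof.
case: (M_nonunits) => MI M1 _ /(RX_ext_contract (content_mul_ideal p MI)) [g Sg Npg].
suff Np : coefs_in (content_mul M p) p.
  by have := strong_divisor_poly_neq0; rewrite (nakayama_content M_nonunits Np) eqxx.
apply: (coefs_in_mul_cancel (content_mul_ideal p MI) MI _ _ (Sigma_not_coefs_in MI M1 Sg) Npg).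
  by move=> j y; apply: content_mulr => //; apply: content_coef.
move=> x y /(nonunits_ideal_unit M_nonunits).
exact: ideal_unit_cancel (content_mul_ideal p MI).
Qed.

Lemma strong_divisor_coef_unit k u : f p = u * f (p`_k)%:P -> is_unit u.
Proof.
move=> pu; apply: NNPP => u_nunit; apply: poly_notin_content_mul_ext; rewrite pu.
apply: nonunit_mul_ext => //.
by apply: coefs_in_polyC; [apply: content_ideal | apply: content_coef].
Qed.

Lemma coef_in_principal k : principal (f p) (f (p`_k)%:P).
Proof.
case: p_sd => _ cmp; have [sub|] := cmp _ (principal_ideal (f (p`_k)%:P)); last first.
  by apply; apply: principal_self.
have [u pu] := sub _ (principal_self (f p)).
have [w uw] := strong_divisor_coef_unit pu.
by exists w; rewrite pu mulrA (mulrC w) uw mul1r.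
Qed.

Lemma exists_coef_divisor : exists j, principal (f (p`_j)%:P) (f p).
Proof.
apply: NNPP => nodiv; case: (M_nonunits) => MI _ _.
suff Np : coefs_in (content_mul M p) p.
  by have := strong_divisor_poly_neq0; rewrite (nakayama_content M_nonunits Np) eqxx.
move=> k.
have [v pk] := coef_in_principal k.
apply: (RX_ext_contract_polyC (content_mul_ideal p MI)); rewrite pk.
apply: nonunit_mul_ext => [[w vw]|]; last exact: content_coef.
by apply: nodiv; exists k, w; rewrite pk mulrA (mulrC w) vw mul1r.
Qed.

Lemma ext_content_principal :
  ideal_eq (ext_ideal (fun r : R => f r%:P) (content p)) (principal (f p)).
Proof.
have fC_ideal : is_ideal (fun r => principal (f p) (f r%:P)).
  exact: (ideal_comap (f \o polyC) (principal_ideal (f p))).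
move=> x; split.
- move=> [n [b [a [pa ->]]]]; apply: ideal_sum => [|k _]; first exact: principal_ideal.
  apply: idealMl; first exact: principal_ideal.
  exact: (content_sub_ideal fC_ideal coef_in_principal (pa k)).
- move=> [c ->]; exists (size p), (fun k => c * f 'X^k), (fun k => p`_k); split.
    by move=> k; apply: content_coef.
  by rewrite {1}(rmorph_poly_sum f p) mulr_sumr; apply: eq_bigr => k _; rewrite mulrA.
Qed.

Lemma content_principal_coef i :
  principal (f (p`_i)%:P) (f p) -> ideal_eq (content p) (principal p`_i).
Proof.
move=> [u pu] x; split; last first.
  by move=> [a ->]; apply: idealMl; [apply: content_ideal | apply: content_coef].
apply: (content_sub_ideal (principal_ideal _)) => k; apply: f_polyC_principal.
by have [c pk] := coef_in_principal k; exists (c * u); rewrite pk pu mulrA.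
Qed.

Lemma coef_strong_divisor j w : f p = w * f (p`_j)%:P -> strong_divisor p`_j.
Proof.
move=> pw; case: p_sd => reg cmp; split.
  move=> r pr0; apply: f_polyC_eq0; apply: reg.
  by rewrite pw -mulrA -rmorphM -polyCM pr0 rmorph0 mulr0.
move=> J JI; have [sub|sub] := cmp _ (RX_ext_ideal JI); [left | right].
  move=> _ [a ->]; apply: idealMl => //; apply: (RX_ext_contract_polyC JI).
  by apply: sub; apply: coef_in_principal.
move=> y Jy; apply: f_polyC_principal.
have [c yc] : principal (f p) (f y%:P).
  by apply: sub; apply: loc_ext_img; [apply: Sigma1 | apply: coefs_in_polyC].
by exists (c * w); rewrite yc pw mulrA.
Qed.

End StrongDivisor.

Section SpecImage.
Variables (p : {poly R}) (C : comNzRingType) (g : {rmorphism B -> C}).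
Hypothesis g_loc : is_localization (powers (f p)) g.

Lemma spec_image_prime P Q : prime_ideal Q -> ideal_eq P (fun r => Q (g (f r%:P))) ->
  prime_ideal P /\ ~ ideal_sub (content p) P.
Proof.
move=> Qprime PQ; split.
  exact: (prime_ideal_eq PQ (prime_ideal_comap (g \o f \o polyC) Qprime)).
move=> pP; case: Qprime => QI Q1 _; case: g_loc => gS _ _; apply: Q1.
have [u pu] := gS (f p) (ex_intro _ 1%N (esym (expr1 _))).
rewrite -pu; apply: idealMr => //.
rewrite (rmorph_poly_sum f p) rmorph_sum; apply: ideal_sum => // k _.
by rewrite rmorphM; apply: idealMl => //; apply/PQ; apply: pP; apply: content_coef.
Qed.

Lemma spec_image_lift P : prime_ideal P -> ~ ideal_sub (content p) P ->
  exists Q : C -> Prop, prime_ideal Q /\ ideal_eq P (fun r => Q (g (f r%:P))).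
Proof.
move=> Pprime pnP; have Pxprime := coefs_in_prime Pprime; case: (Pprime) => PI P1 _.
have S1 := mul_powers1 p (@Sigma1 R).
have SM := mul_powersM (a := p) (Sigma_mul M_nonunits).
have loc := localization_comp f_loc g_loc.
have disjoint : forall s, mul_powers (@Sigma R) p s -> ~ coefs_in P s.
  move=> _ [s [n [Ss ->]]]; case: (Pxprime) => _ _ PxP /PxP [|/(prime_ideal_expr Pxprime) Pp].
    exact: (Sigma_not_coefs_in PI P1 Ss).
  by apply: pnP; apply: content_sub_ideal.
exists (loc_ext (mul_powers (@Sigma R) p) (g \o f) (coefs_in P)); split.
  exact: (loc_ext_prime loc S1 SM Pxprime disjoint).
move=> r; split=> [Pr|].
  by apply: loc_ext_img; [apply: S1 | apply: coefs_in_polyC].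
by move=> /(loc_ext_prime_contract loc SM Pxprime disjoint) /(_ 0%N); rewrite coefC.
Qed.

End SpecImage.
End RX.

Unset Implicit Arguments. Set Strict Implicit.

Theorem mainTheorem15 (R : comNzRingType) (p : {poly R})
    (B : comNzRingType) (f : {rmorphism {poly R} -> B}) :
  is_local R ->
  is_localization (@Sigma R) f ->
  strong_divisor (f p) -> ~ is_unit (f p) ->
  [/\ ideal_eq (ext_ideal (fun r : R => f r%:P) (content p)) (principal (f p)),
      (exists rho : R, [/\ strong_divisor rho,
                           ideal_eq (content p) (principal rho) &
                           equivalent (f p) (f rho%:P)]),
      (forall i : nat, principal (f (p`_i)%:P) (f p) ->
                       ideal_eq (content p) (principal p`_i)) &
      (forall (C : comNzRingType) (g : {rmorphism B -> C}),
         is_localization (powers (f p)) g ->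
         forall P : R -> Prop,
           (exists Q : C -> Prop, prime_ideal Q /\
                ideal_eq P (fun r => Q (g (f r%:P))))
           <-> (prime_ideal P /\ ~ ideal_sub (content p) P))].
Proof.
move=> /local_nonunits_ideal [M M_nonunits] f_loc p_sd _.
have [j [w pw]] := exists_coef_divisor M_nonunits f_loc p_sd.
split.
- exact: (ext_content_principal M_nonunits f_loc p_sd).
- exists p`_j; split.
  + exact: (coef_strong_divisor M_nonunits f_loc p_sd pw).
  + exact: (content_principal_coef M_nonunits f_loc p_sd (ex_intro _ w pw)).
  + rewrite pw; apply: equivalent_unit_mull.
    exact: (strong_divisor_coef_unit M_nonunits f_loc p_sd pw).
- exact: (content_principal_coef M_nonunits f_loc p_sd).
- move=> C g g_loc P; split=> [[Q [Qprime PQ]] | [Pprime pnP]].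
  + exact: (spec_image_prime g_loc Qprime PQ).
  + exact: (spec_image_lift M_nonunits f_loc g_loc Pprime pnP).
Qed.
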